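(* Let $(X,\beta)$ be a finite wGKAT automaton and let $\bar\partial$ be the unique transition map on $\mathrm{Exp}/{\equiv}$ making the quotient map $[-]_\equiv:\mathrm{Exp}\to\mathrm{Exp}/{\equiv}$ a homomorphism from $(\mathrm{Exp},\partial)$ to $(\mathrm{Exp}/{\equiv},\bar\partial)$. A map $h:X\to\mathrm{Exp}$ is a solution up to $\equiv$ of the system associated with $(X,\beta)$ if and only if $[-]_\equiv\circ h$ is a homomorphism of wGKAT automata from $(X,\beta)$ to $(\mathrm{Exp}/{\equiv},\bar\partial)$.
   Context: Fix a finite set $T$ of primitive tests, a set $\mathrm{Act}$ of atomic actions, a set $\mathrm{Out}$ of return values, and a semiring $(S,+,\cdot,0,1)$ that is positive ($x+y=0\Rightarrow x=y=0$), refinement (whenever $x+y=z+w$ there exist $s,t,u,v$ with $s+t=x$, $s+u=z$, $u+v=y$, $t+v=w$) and Conway (with ${}^*:S\to S$ satisfying $(a+b)^*=a^*(ba^* )^*$, $(ab)^*=1+a(ba)^*b$). Tests: $b,c\in\mathrm{BExp}::=\mathtt{0}\mid\mathtt{1}\mid t\ (t\in T)\mid\bar b\mid b+c\mid bc$ ($\mathtt 0,\mathtt 1$ false/true, distinct from semiring $0,1$); $\equiv_{BA}$ is Boolean equivalence; $\mathrm{At}$ is the finite set of atoms of the free Boolean algebra on $T$, atoms also regarded as tests; $\alpha\le b$ means $\alpha$ entails $b$. Expressions: $e,f\in\mathrm{Exp}::= p\in\mathrm{Act}\mid b\in\mathrm{BExp}\mid e+_b f\mid e;f\mid e^{(b)}\mid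 v\in\mathrm{Out}\mid e\oplus_{r,s} f\ (r,s\in S)$; $\odot r:=\mathtt 1\oplus_{r,0}\mathtt 0$. $\mathcal M_\omega(X)$: finitely supported maps $X\to S$, pointwise operations; $\delta_x$ indicator of $x$; $\nu[A]=\sum_{x\in A}\nu(x)$; $\mathrm{supp}(\nu)=\{x:\nu(x)\ne0\}$. A wGKAT automaton is $(X,\beta)$ with $\beta:X\to\mathcal M_\omega(\{\mathsf{acc},\mathsf{rej}\}+\mathrm{Out}+\mathrm{Act}\times X)^{\mathrm{At}}$. A map $h:X\to Y$ between automata $(X,\beta),(Y,\gamma)$ is a homomorphism if for all $x,\alpha$: $\gamma(h(x))_\alpha(o)=\beta(x)_\alpha(o)$ for $o\in\{\mathsf{acc},\mathsf{rej}\}+\mathrm{Out}$, and $\gamma(h(x))_\alpha(p,y)=\beta(x)_\alpha[\{p\}\times h^{-1}(y)]$. The derivative automaton $(\mathrm{Exp},\partial)$: $\partial(b)_\alpha=\delta_{\mathsf{acc}}$ if $\alpha\le b$, else $\delta_{\mathsf{rej}}$; $\partial(v)_\alpha=\delta_v$; $\partial(p)_\alpha=\delta_{(p,\mathtt 1)}$; $\partial(e+_bf)_\alpha=\partial(e)_\alpha$ if $\alpha\le b$, else $\partial(f)_\alpha$; $\partial(e\oplus_{r,s}f)_\alpha=r\partial(e)_\alpha+s\partial(f)_\alpha$; $\partial(e;f)_\alpha=\sum_x\partial(e)_\alpha(x)c_{\alpha,f}(x)$ with $c_{\alpha,f}(\mathsf{acc})=\partial(f)_\alpha$, $c_{\alpha,f}(x)=\delta_x$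 for $x\in\{\mathsf{rej}\}\cup\mathrm{Out}$, $c_{\alpha,f}(p,e')=\delta_{(p,e';f)}$; $\partial(e^{(b)})_\alpha(x)$ is $1$ if $x=\mathsf{acc}$ and $\alpha\le\bar b$; $\partial(e)_\alpha(\mathsf{acc})^*\partial(e)_\alpha(x)$ if $x\in\{\mathsf{rej}\}\cup\mathrm{Out}$ and $\alpha\le b$; $\partial(e)_\alpha(\mathsf{acc})^*\partial(e)_\alpha(p,e')$ if $x=(p,e';e^{(b)})$ and $\alpha\le b$; $0$ otherwise. Generalized guarded sum: $\mathrm{GS}_{\alpha\in\emptyset}e_\alpha:=\mathtt 0$, $\mathrm{GS}_{\alpha\in\Phi}e_\alpha:=e_\gamma+_\gamma\mathrm{GS}_{\alpha\in\Phi\setminus\{\gamma\}}e_\alpha$ ($\gamma\in\Phi$); generalized weighted sum: $\bigoplus_{i\in I}r_i\cdot e_i:=e_j\oplus_{r_j,1}\big(\bigoplus_{i\in I\setminus\{j\}}r_i\cdot e_i\big)$ ($j\in I$), the empty weighted sum being $\odot0$; both well defined up to $\equiv$. The system associated with $(X,\beta)$ assigns to each $x\in X$ the formal term $\tau(x)=\mathrm{GS}_{\alpha\in\mathrm{At}}\big(\bigoplus_{d\in\mathrm{supp}(\beta(x)_\alpha)}\beta(x)_\alpha(d)\cdot\mathrm{sys}(d)\big)$ with $\mathrm{sys}(\mathsf{rej})=\mathtt 0$, $\mathrm{sys}(\mathsf{acc})=\mathtt 1$, $\mathrm{sys}(v)=v$, $\mathrm{sys}(p,x')=p\,x'$ (a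 formal product of the expression $p$ with the indeterminate $x'$). For $h:X\to\mathrm{Exp}$, $h^\#(\tau(x))\in\mathrm{Exp}$ is obtained by replacing each formal product $g\,x'$ by $g;h(x')$ (and keeping expressions, guarded choices and weighted choices as they are). $h$ is a solution up to $\equiv$ if $h(x)\equiv h^\#(\tau(x))$ for all $x\in X$. $E:\mathrm{Exp}\to S^{\mathrm{At}}$: $E(p)_\alpha=E(v)_\alpha=0$; $E(b)_\alpha=1$ if $\alpha\le b$ else $0$; $E(e\oplus_{r,s}f)_\alpha=rE(e)_\alpha+sE(f)_\alpha$; $E(e+_bf)_\alpha=E(e)_\alpha$ if $\alpha\le b$ else $E(f)_\alpha$; $E(e;f)_\alpha=E(e)_\alpha E(f)_\alpha$; $E(e^{(b)})_\alpha=E(\bar b)_\alpha$. The relation $\equiv$ is the smallest congruence on $\mathrm{Exp}$ (tests taken up to $\equiv_{BA}$; sequencing binds tighter than $\oplus$, $\odot$ binds tightest) containing, for all $e,f,g\in\mathrm{Exp}$, tests $b,c$, $v\in\mathrm{Out}$, $r,s,t,u\in S$: (G1) $e+_be\equiv e$; (G2) $e+_bf\equiv b;e+_bf$; (G3) $e+_bf\equiv f+_{\bar b}e$; (G4) $(e+_bf)+_cg\equiv e+_{bc}(f+_cg)$; (D1) $e\oplus_{r,s}(f+_bg)\equiv(e\oplus_{r,s}f)+_b(e\oplus_{r,s}g)$; (D2) $e\oplus_{r,s}(f\oplus_{t,u}g)\equiv e\oplus_{r,1}(f\oplus_{st,su}g)$; (D3) $b;(e\oplus_{r,s}f)\equiv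 b;(b;e\oplus_{r,s}b;f)$; (S1) $\mathtt 1;e\equiv e\equiv e;\mathtt 1$; (S2) $(e;f);g\equiv e;(f;g)$; (S3) $\mathtt 0;e\equiv\mathtt 0$; (S4) $(e\oplus_{r,s}f);g\equiv e;g\oplus_{r,s}f;g$; (S5) $(e+_bf);g\equiv e;g+_bf;g$; (S6) $v;e\equiv v$; (S7) $b;c\equiv bc$; (L1) $e^{(b)}\equiv e;e^{(b)}+_b\mathtt 1$; (C1) $\odot1\equiv\mathtt 1$; (C2) $\odot0;e\equiv\odot0$; (W1) $e\oplus_{r,s}e\equiv\odot(r+s);e$; (W2) $e\oplus_{r,s}f\equiv f\oplus_{s,r}e$; (W3) $e\oplus_{r,s}(f\oplus_{t,u}g)\equiv(e\oplus_{r,st}f)\oplus_{1,su}g$; (W4) $e\oplus_{ru,s}f\equiv(\odot u;e)\oplus_{r,s}f$; and closed under the rules (L2) if $e\equiv(f\oplus_{r,s}\mathtt 1)+_cg$ then $c;e^{(b)}\equiv c;((\odot(s^*r);f;e^{(b)})+_b\mathtt 1)$; (F1) if $g\equiv e;g+_bf$ and $E(e)_\alpha=0$ for all $\alpha\in\mathrm{At}$ then $g\equiv e^{(b)};f$. *)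

From HB Require Import structures.
From mathcomp Require Import all_boot all_order all_algebra.
From mathcomp Require Import boolp.
Set Implicit Arguments. Unset Strict Implicit. Unset Printing Implicit Defensive.
Import GRing.Theory.
Local Open Scope ring_scope.

Definition positive_sr (S : pzSemiRingType) : Prop :=
  forall x y : S, x + y = 0 -> x = 0 /\ y = 0.
Definition refinement_sr (S : pzSemiRingType) : Prop :=
  forall x y z w : S, x + y = z + w ->
    exists s t u v : S, [/\ s + t = x, s + u = z, u + v = y & t + v = w].
Definition conway_star (S : pzSemiRingType) (star : S -> S) : Prop :=
  forall a b : S, star (a + b) = star a * star (b * star a) /\
                  star (a * b) = 1 + a * star (b * a) * b.

Inductive bexp (T : Type) : Type :=
| BZero | BOne | BVar of T | BNot of bexp T | BOr of bexp T & bexp T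
| BAnd of bexp T & bexp T.
Arguments BZero {T}. Arguments BOne {T}.

(* atoms of the free Boolean algebra on T = valuations T -> bool *)
Definition atom (T : finType) := {ffun T -> bool}.

Fixpoint beval (T : finType) (b : bexp T) (a : atom T) : bool :=
  match b with
  | BZero => false | BOne => true | BVar t => a t
  | BNot b => ~~ beval b a
  | BOr b c => beval b a || beval c a
  | BAnd b c => beval b a && beval c a
  end.
Definition leA (T : finType) (a : atom T) (b : bexp T) := beval b a.
Definition equivBA (T : finType) (b c : bexp T) := forall a : atom T, beval b a = beval c a.
Definition atom_test (T : finType) (a : atom T) : bexp T :=
  foldr (fun t acc => BAnd (if a t then BVar t else BNot (BVar t)) acc) BOne (enum T).

Section Exp.
Variables (S : pzSemiRingType) (T : finType) (Act Out : Type).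

Inductive exp : Type :=
| EAct of Act
| ETest of bexp T
| EGuard of bexp T & exp & exp
| ESeq of exp & exp
| ELoop of bexp T & exp
| ERet of Out
| EWeight of S & S & exp & exp.

Definition eone : exp := ETest BOne.
Definition ezero : exp := ETest BZero.
Definition odot (r : S) : exp := EWeight r 0 eone ezero.
End Exp.
Arguments eone {S T Act Out}.
Arguments odot {S T Act Out}.
Arguments ETest {S} {T} {Act Out}.
Arguments ERet {S T Act} {Out}.
Arguments EAct {S T} {Act} {Out}. Arguments ezero {S T Act Out}.

Inductive outcome (Out Act Y : Type) : Type :=
| Acc | Rej | Ret of Out | Step of Act & Y.
Arguments Acc {Out Act Y}. Arguments Rej {Out Act Y}.
Arguments Ret {Out Act Y}. Arguments Step {Out Act Y}.

Definition out2sum (Out Act Y : Type) (o : outcome Out Act Y) : (bool + Out) + (Act * Y) :=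
  match o with
  | Acc => inl (inl true) | Rej => inl (inl false)
  | Ret v => inl (inr v) | Step p y => inr (p, y) end.
Definition sum2out (Out Act Y : Type) (s : (bool + Out) + (Act * Y)) : outcome Out Act Y :=
  match s with
  | inl (inl true) => Acc | inl (inl false) => Rej
  | inl (inr v) => Ret v | inr (p, y) => Step p y end.
Lemma out2sumK (Out Act Y : Type) : cancel (@out2sum Out Act Y) (@sum2out Out Act Y).
Proof. by case. Qed.
HB.instance Definition _ (Out Act Y : eqType) :=
  Equality.copy (outcome Out Act Y) (can_type (@out2sumK Out Act Y)).

(* Finitely supported weightings M_w(Y), represented as finite formal sums
   (lists of (point, weight)); nu(x) and nu[A] are computed from them. *)
Section Measures.
Variables (S : pzSemiRingType).
Definition mw (Y : Type) := seq (Y * S).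
Definition mass (Y : Type) (nu : mw Y) (A : Y -> Prop) : S :=
  \sum_(x <- nu | `[< A x.1 >]) x.2.
Definition ev (Y : Type) (nu : mw Y) (y : Y) : S := mass nu (fun z => z = y).
Definition scale (Y : Type) (r : S) (nu : mw Y) : mw Y := [seq (x.1, r * x.2) | x <- nu].
End Measures.

Definition wgkat_trans (S : pzSemiRingType) (T : finType) (Act Out Y : Type) :=
  Y -> atom T -> mw S (outcome Out Act Y).

Definition is_hom (S : pzSemiRingType) (T : finType) (Act Out Y Z : Type)
  (bY : wgkat_trans S T Act Out Y) (bZ : wgkat_trans S T Act Out Z) (h : Y -> Z) : Prop :=
  forall (y : Y) (a : atom T),
    [/\ ev (bZ (h y) a) Acc = ev (bY y a) Acc,
        ev (bZ (h y) a) Rej = ev (bY y a) Rej,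
        (forall v : Out, ev (bZ (h y) a) (Ret v) = ev (bY y a) (Ret v)) &
        (forall (p : Act) (z : Z),
            ev (bZ (h y) a) (Step p z) =
            mass (bY y a) (fun o => exists y', o = Step p y' /\ h y' = z))].

Section Deriv.
Variables (S : pzSemiRingType) (star : S -> S) (T : finType) (Act Out : Type).
Local Notation exp := (exp S T Act Out).
Local Notation outc := (outcome Out Act exp).

Definition acc_weight (nu : mw S outc) : S :=
  \sum_(x <- nu) (if x.1 is Acc then x.2 else 0).

Fixpoint wderiv (e : exp) (a : atom T) : mw S outc :=
  match e with
  | ETest b => if leA a b then [:: (Acc, 1)] else [:: (Rej, 1)]
  | ERet v => [:: (Ret v, 1)]
  | EAct p => [:: (Step p eone, 1)]
  | EGuard b e f => if leA a b then wderiv e a else wderiv f a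
  | EWeight r s e f => scale r (wderiv e a) ++ scale s (wderiv f a)
  | ESeq e f =>
      let de := wderiv e a in let df := wderiv f a in
      flatten [seq match x.1 with
                   | Acc => scale x.2 df
                   | Rej => [:: (Rej, x.2)]
                   | Ret v => [:: (Ret v, x.2)]
                   | Step p e' => [:: (Step p (ESeq e' f), x.2)]
                   end | x <- de]
  | ELoop b e =>
      if ~~ leA a b then [:: (Acc, 1)] else
      let de := wderiv e a in let c := star (acc_weight de) in
      flatten [seq match x.1 with
                   | Acc => [::]
                   | Rej => [:: (Rej, c * x.2)]
                   | Ret v => [:: (Ret v, c * x.2)]
                   | Step p e' => [:: (Step p (ESeq e' (ELoop b e)), c * x.2)]
                   end | x <- de]
  end.

Fixpoint Eterm (e : exp) (a : atom T) : S :=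
  match e with
  | EAct _ | ERet _ => 0
  | ETest b => if leA a b then 1 else 0
  | EWeight r s e f => r * Eterm e a + s * Eterm f a
  | EGuard b e f => if leA a b then Eterm e a else Eterm f a
  | ESeq e f => Eterm e a * Eterm f a
  | ELoop b _ => if leA a (BNot b) then 1 else 0
  end.

Inductive wequiv : exp -> exp -> Prop :=
| eq_refl e : wequiv e e
| eq_sym e f : wequiv e f -> wequiv f e
| eq_trans e f g : wequiv e f -> wequiv f g -> wequiv e g
| eq_test b c : equivBA b c -> wequiv (ETest b) (ETest c)
| eq_guard b c e e' f f' : equivBA b c -> wequiv e e' -> wequiv f f' ->
    wequiv (EGuard b e f) (EGuard c e' f')
| eq_seq e e' f f' : wequiv e e' -> wequiv f f' -> wequiv (ESeq e f) (ESeq e' f')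
| eq_loop b c e e' : equivBA b c -> wequiv e e' -> wequiv (ELoop b e) (ELoop c e')
| eq_weight r s e e' f f' : wequiv e e' -> wequiv f f' ->
    wequiv (EWeight r s e f) (EWeight r s e' f')
| ax_G1 b e : wequiv (EGuard b e e) e
| ax_G2 b e f : wequiv (EGuard b e f) (EGuard b (ESeq (ETest b) e) f)
| ax_G3 b e f : wequiv (EGuard b e f) (EGuard (BNot b) f e)
| ax_G4 b c e f g : wequiv (EGuard c (EGuard b e f) g) (EGuard (BAnd b c) e (EGuard c f g))
| ax_D1 r s b e f g : wequiv (EWeight r s e (EGuard b f g))
    (EGuard b (EWeight r s e f) (EWeight r s e g))
| ax_D2 r s t u e f g : wequiv (EWeight r s e (EWeight t u f g))
    (EWeight r 1 e (EWeight (s * t) (s * u) f g))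
| ax_D3 b r s e f : wequiv (ESeq (ETest b) (EWeight r s e f))
    (ESeq (ETest b) (EWeight r s (ESeq (ETest b) e) (ESeq (ETest b) f)))
| ax_S1l e : wequiv (ESeq eone e) e
| ax_S1r e : wequiv e (ESeq e eone)
| ax_S2 e f g : wequiv (ESeq (ESeq e f) g) (ESeq e (ESeq f g))
| ax_S3 e : wequiv (ESeq ezero e) ezero
| ax_S4 r s e f g : wequiv (ESeq (EWeight r s e f) g) (EWeight r s (ESeq e g) (ESeq f g))
| ax_S5 b e f g : wequiv (ESeq (EGuard b e f) g) (EGuard b (ESeq e g) (ESeq f g))
| ax_S6 v e : wequiv (ESeq (ERet v) e) (ERet v)
| ax_S7 b c : wequiv (ESeq (ETest b) (ETest c)) (ETest (BAnd b c))
| ax_L1 b e : wequiv (ELoop b e) (EGuard b (ESeq e (ELoop b e)) eone)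
| ax_C1 : wequiv (odot 1) eone
| ax_C2 e : wequiv (ESeq (odot 0) e) (odot 0)
| ax_W1 r s e : wequiv (EWeight r s e e) (ESeq (odot (r + s)) e)
| ax_W2 r s e f : wequiv (EWeight r s e f) (EWeight s r f e)
| ax_W3 r s t u e f g : wequiv (EWeight r s e (EWeight t u f g))
    (EWeight 1 (s * u) (EWeight r (s * t) e f) g)
| ax_W4 r s u e f : wequiv (EWeight (r * u) s e f) (EWeight r s (ESeq (odot u) e) f)
| rule_L2 b c e f g r s : wequiv e (EGuard c (EWeight r s f eone) g) ->
    wequiv (ESeq (ETest c) (ELoop b e))
          (ESeq (ETest c)
             (EGuard b (ESeq (odot (star s * r)) (ESeq f (ELoop b e))) eone))
| rule_F1 b e f g : wequiv g (EGuard b (ESeq e g) f) ->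
    (forall a : atom T, Eterm e a = 0) -> wequiv g (ESeq (ELoop b e) f).

End Deriv.

Section Systems.
Variables (S : pzSemiRingType) (T : finType) (Act Out : eqType) (X : finType).
Local Notation exp := (exp S T Act Out).

(* formal terms over indeterminates X *)
Inductive sterm : Type :=
| SExp of exp
| SProd of exp & X
| SGuard of bexp T & sterm & sterm
| SWeight of S & S & sterm & sterm.

Fixpoint GS (atoms : seq (atom T)) (F : atom T -> sterm) : sterm :=
  match atoms with
  | [::] => SExp ezero
  | a :: rest => SGuard (atom_test a) (F a) (GS rest F)
  end.
Fixpoint WS (I : Type) (idx : seq I) (r : I -> S) (F : I -> sterm) : sterm :=
  match idx with
  | [::] => SExp (odot 0)
  | j :: rest => SWeight (r j) 1 (F j) (WS rest r F)
  end.

Definition sys (d : outcome Out Act X) : sterm :=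
  match d with
  | Rej => SExp ezero | Acc => SExp eone
  | Ret v => SExp (ERet v)
  | Step p x' => SProd (EAct p) x'
  end.

Definition supp (nu : mw S (outcome Out Act X)) : seq (outcome Out Act X) :=
  [seq d <- undup (map fst nu) | ev nu d != 0].

Definition tau (beta : wgkat_trans S T Act Out X) (x : X) : sterm :=
  GS (enum (atom T)) (fun a =>
     WS (supp (beta x a)) (fun d => ev (beta x a) d) sys).

Fixpoint hsharp (h : X -> exp) (t : sterm) : exp :=
  match t with
  | SExp e => e
  | SProd g x' => ESeq g (h x')
  | SGuard b t u => EGuard b (hsharp h t) (hsharp h u)
  | SWeight r s t u => EWeight r s (hsharp h t) (hsharp h u)
  end.

Definition is_solution (star : S -> S) (beta : wgkat_trans S T Act Out X) (h : X -> exp) :=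
  forall x : X, wequiv star (h x) (hsharp h (tau beta x)).
End Systems.

(* A solution up to ≡ and a homomorphism into Exp/≡ are two readings of the same
   equations.  Unfolding the system, the derivative of h#(τ x) at an atom α is β(x)_α with
   every next state x' replaced by 1;h(x'); since [-]_≡ is a homomorphism, a solution
   therefore yields one.  Conversely, every expression is ≡ to the guarded sum over atoms of
   the weighted sum of its derivative (the fundamental theorem, by induction on the
   expression, with rule L2 for loops).  Two expressions whose derivatives give the same
   weight to every ≡-class of outcomes thus have ≡ expansions, and a homomorphism says
   exactly this of h(x) and h#(τ x). *)

From Pilot Require Import Defs.
From HB Require Import structures.
From mathcomp Require Import all_boot all_order all_algebra.
From mathcomp Require Import boolp.
From Stdlib Require Import Setoid Morphisms.
Set Implicit Arguments.
Unset Strict Implicit.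
Unset Printing Implicit Defensive.
Import GRing.Theory.
Local Open Scope ring_scope.

Section Outcomes.
Variables (Out Act : Type).
Local Notation outcome := (outcome Out Act).

Definition omap Y Z (g : Y -> Z) (o : outcome Y) : outcome Z :=
  match o with Acc => Acc | Rej => Rej | Ret v => Ret v | Step p y => Step p (g y) end.

Definition outcome_rel Y (R : Y -> Y -> Prop) (o1 o2 : outcome Y) : Prop :=
  match o1, o2 with
  | Acc, Acc | Rej, Rej => True
  | Ret v, Ret v' => v = v'
  | Step p y, Step p' y' => p = p' /\ R y y'
  | _, _ => False
  end.

#[export] Instance outcome_rel_Equivalence Y (R : Y -> Y -> Prop) :
  Equivalence R -> Equivalence (outcome_rel R).
Proof.
move=> eqR; split.
- by case=> //= p y; split; [|reflexivity].
- by case=> [||v|p y] [||v'|p' y'] //= [-> /(symmetry (R:=R))].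
- case=> [||v|p y] [||v'|p' y'] [||v''|p'' y''] //=; first by move=> -> ->.
  by move=> [-> Ryy'] [-> Ry'y'']; split; last by transitivity y'.
Qed.

Lemma outcome_rel_kernel Y Z (R : Y -> Y -> Prop) (g : Y -> Z) o1 o2 :
    (forall y y', R y y' <-> g y = g y') ->
  outcome_rel R o1 o2 <-> omap g o1 = omap g o2.
Proof.
move=> Rg; case: o1 => [||v|p y]; case: o2 => [||v'|p' y'] //=.
  by split=> [-> | []].
by rewrite Rg; split=> [[-> ->] | []].
Qed.

End Outcomes.

Section Weightings.
Variable S : pzSemiRingType.

Lemma mass_ext Y (nu : mw S Y) (A B : Y -> Prop) :
  (forall y, A y <-> B y) -> mass nu A = mass nu B.
Proof. by move=> AB; apply: eq_bigl => x; apply: asbool_equiv_eq. Qed.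

Lemma mass_cat Y (nu1 nu2 : mw S Y) A : mass (nu1 ++ nu2) A = mass nu1 A + mass nu2 A.
Proof. exact: big_cat. Qed.

Lemma mass_scale Y r (nu : mw S Y) A : mass (scale r nu) A = r * mass nu A.
Proof. by rewrite /mass /scale big_map mulr_sumr. Qed.

Lemma mass1 Y (y : Y) (w : S) (A : Y -> Prop) :
  mass [:: (y, w)] A = if `[< A y >] then w else 0.
Proof. by rewrite /mass big_cons big_nil /= addr0. Qed.

Lemma mass_filter Y (nu : mw S Y) (p : pred (Y * S)) A :
  mass [seq x <- nu | p x] A = \sum_(x <- nu | p x && `[< A x.1 >]) x.2.
Proof. exact: big_filter_cond. Qed.

Lemma omap_preimage (Out Act Y Z : Type) (g : Y -> Z) (nu : mw S (outcome Out Act Y)) o :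
  mass nu (fun d => omap g d = o) =
  match o with
  | Acc => ev nu Acc
  | Rej => ev nu Rej
  | Ret v => ev nu (Ret v)
  | Step p z => mass nu (fun d => exists y, d = Step p y /\ g y = z)
  end.
Proof.
case: o => [||v|p z]; apply: mass_ext => -[||v'|p' y] /=;
  try by split=> // -[? []].
- by split=> -[->].
- by split=> [[-> <-]|[y' [[-> ->] <-]]] //; exists y.
Qed.

Lemma is_homP (T : finType) (Act Out Y Z : Type)
    (bY : wgkat_trans S T Act Out Y) (bZ : wgkat_trans S T Act Out Z) (g : Y -> Z) :
  is_hom bY bZ g <->
  forall y a o, ev (bZ (g y) a) o = mass (bY y a) (fun d => omap g d = o).
Proof.
split=> [gh y a o | gh y a]; last by split=> [|| v | p z]; rewrite gh omap_preimage.
by have [? ? ? ?] := gh y a; rewrite omap_preimage; case: o.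
Qed.
End Weightings.

(** * Derived laws of ≡ *)

Section Equational.
Variables (S : pzSemiRingType) (star : S -> S) (T : finType) (Act Out : eqType).
Local Notation exp := (exp S T Act Out).
Local Notation weq := (@wequiv S star T Act Out).
Local Notation "e ≡ f" := (weq e f) (at level 70).
Local Notation "e +[ b ] f" := (EGuard b e f) (at level 50).
Local Notation "e ;; f" := (ESeq e f) (at level 40).
Local Notation test := (@ETest S T Act Out).

#[local] Instance wequiv_Equivalence : Equivalence weq.
Proof. by split; [exact: Defs.eq_refl | exact: Defs.eq_sym | exact: Defs.eq_trans]. Qed.

#[local] Hint Resolve Defs.eq_refl : core.

#[local] Instance ESeq_Proper : Proper (weq ==> weq ==> weq) (@ESeq S T Act Out).
Proof. by move=> ? ? ? ? ? ?; apply: eq_seq. Qed.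

#[local] Instance EGuard_Proper b : Proper (weq ==> weq ==> weq) (EGuard b).
Proof. by move=> ? ? ? ? ? ?; apply: eq_guard. Qed.

#[local] Instance EWeight_Proper r s : Proper (weq ==> weq ==> weq) (EWeight r s).
Proof. by move=> ? ? ? ? ? ?; apply: eq_weight. Qed.

Lemma guard_equivBA {b c} {e f : exp} : equivBA b c -> e +[b] f ≡ e +[c] f.
Proof. by move=> bc; apply: eq_guard. Qed.

Lemma test_equivBA b c : equivBA b c -> test b ≡ test c.
Proof. exact: eq_test. Qed.

Lemma guard1 b (e f : exp) : equivBA b BOne -> e +[b] f ≡ e.
Proof.
have swap g f' : g +[BOne] f' ≡ ezero +[BZero] g.
  by rewrite ax_G3 (@guard_equivBA _ BZero) // ax_G2 ax_S3.
by move=> /guard_equivBA ->; rewrite swap -(swap e e) ax_G1.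
Qed.

Lemma guard0 b (e f : exp) : equivBA b BZero -> e +[b] f ≡ f.
Proof. by move=> b0; rewrite ax_G3 guard1 // => a; rewrite /= b0. Qed.

Lemma guard_testN b (f g : exp) : f +[b] g ≡ f +[b] (test (BNot b) ;; g).
Proof. by rewrite ax_G3 ax_G2 ax_G3 (@guard_equivBA _ b) // => a /=; rewrite negbK. Qed.

Lemma test_seqE b (e : exp) : test b ;; e ≡ e +[b] ezero.
Proof.
rewrite ax_G2 -{1}(ax_G1 star b (test b ;; e)) guard_testN -ax_S2 ax_S7.
by rewrite (@test_equivBA (BAnd (BNot b) b) BZero) ?ax_S3 // => a /=; rewrite andNb.
Qed.

Lemma guard_inner_equivBA a c c' (x y z : exp) :
  equivBA (BAnd c (BNot a)) (BAnd c' (BNot a)) ->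
  x +[a] (y +[c] z) ≡ x +[a] (y +[c'] z).
Proof.
have K d : x +[a] (y +[d] z) ≡ x +[a] (y +[BAnd d (BNot a)] (z +[BNot a] ezero)).
  by rewrite guard_testN test_seqE ax_G4.
by move=> cc'; rewrite K (guard_equivBA cc') -K.
Qed.

Lemma test_guardT a b (e f : exp) :
  equivBA (BAnd b a) a -> test a ;; (e +[b] f) ≡ test a ;; e.
Proof.
move=> ba; rewrite !test_seqE ax_G4 (guard_equivBA ba).
by rewrite (@guard_inner_equivBA _ a BZero) ?(@guard0 BZero) // => w /=; rewrite andbN.
Qed.

Lemma test_guardF a b (e f : exp) :
  equivBA (BAnd b a) BZero -> test a ;; (e +[b] f) ≡ test a ;; f.
Proof. by move=> ba; rewrite !test_seqE ax_G4 (guard_equivBA ba) guard0. Qed.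

Lemma guard_congr_test a (e f g : exp) :
  test a ;; e ≡ test a ;; f -> e +[a] g ≡ f +[a] g.
Proof. by move=> ef; rewrite ax_G2 ef -ax_G2. Qed.

Lemma odot_seq r (y : exp) : odot r ;; y ≡ EWeight r 0 y ezero.
Proof. by rewrite ax_S4 ax_S1l ax_S3. Qed.

Lemma odot1_seq (y : exp) : odot 1 ;; y ≡ y.
Proof. by rewrite ax_C1 ax_S1l. Qed.

Lemma weight0l_odot0 r (x z : exp) : EWeight 0 r z x ≡ EWeight 0 r (odot 0) x.
Proof. by rewrite -{1}(mulr0 (0 : S)) ax_W4 ax_C2. Qed.

Lemma weight0r_congr r (x z z' : exp) : EWeight r 0 x z ≡ EWeight r 0 x z'.
Proof. by rewrite ax_W2 weight0l_odot0 -(weight0l_odot0 _ _ z') ax_W2. Qed.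

Lemma weight0l s (x y : exp) : EWeight 0 s x y ≡ odot s ;; y.
Proof. by rewrite ax_W2 (weight0r_congr _ _ _ ezero) odot_seq. Qed.

Lemma weight_odot0 s (y : exp) : EWeight s 1 y (odot 0) ≡ odot s ;; y.
Proof.
rewrite odot_seq (weight0r_congr _ _ _ (odot 0)); symmetry.
by rewrite {1}/odot ax_D2 !mul0r.
Qed.

Lemma odotM r s : odot (r * s) ≡ odot r ;; odot s.
Proof. by rewrite {1}/odot ax_W4 -ax_S1r odot_seq. Qed.

Lemma weight_scale_l r s (x y : exp) : EWeight r s x y ≡ EWeight 1 s (odot r ;; x) y.
Proof. by rewrite -{1}(mul1r r) ax_W4. Qed.

Lemma weight_scale_r r s (x y : exp) : EWeight r s x y ≡ EWeight r 1 x (odot s ;; y).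
Proof. by rewrite ax_W2 -{1}(mul1r s) ax_W4 ax_W2. Qed.

Lemma weight1A r t (e f g : exp) :
  EWeight r 1 e (EWeight t 1 f g) ≡ EWeight 1 1 (EWeight r t e f) g.
Proof. by rewrite ax_W3 !mul1r. Qed.

Lemma weight_consC w1 w2 (t1 t2 R : exp) :
  EWeight w1 1 t1 (EWeight w2 1 t2 R) ≡ EWeight w2 1 t2 (EWeight w1 1 t1 R).
Proof. by rewrite !weight1A (ax_W2 star w1). Qed.

Lemma weight_consD w1 w2 (t R : exp) :
  EWeight w1 1 t (EWeight w2 1 t R) ≡ EWeight (w1 + w2) 1 t R.
Proof. by rewrite weight1A ax_W1 -{2}(mul1r (w1 + w2)) ax_W4. Qed.

Lemma weight_cons0 (t R : exp) : EWeight 0 1 t R ≡ R.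
Proof. by rewrite weight0l odot1_seq. Qed.

Definition wsum (L : seq (exp * S)) : exp :=
  foldr (fun x acc => EWeight x.2 1 x.1 acc) (odot 0) L.

Lemma wsum_cat L1 L2 : wsum (L1 ++ L2) ≡ EWeight 1 1 (wsum L1) (wsum L2).
Proof.
elim: L1 => [|x L1 IH] /=; last by rewrite IH weight1A.
by rewrite ax_W2 weight_odot0 odot1_seq.
Qed.

Lemma wsum_scale r L : wsum (scale r L) ≡ odot r ;; wsum L.
Proof.
elim: L => [|x L IH] /=; first by rewrite -odotM mulr0.
symmetry; rewrite odot_seq ax_W2 ax_D2 weight0l odot1_seq mulr1.
by rewrite IH weight_scale_r.
Qed.

Lemma wsum_seq L (f : exp) : wsum L ;; f ≡ wsum [seq (x.1 ;; f, x.2) | x <- L].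
Proof. by elim: L => [|x L IH] /=; rewrite ?ax_C2 // ax_S4 IH. Qed.

Local Notation outc := (outcome Out Act exp).
Local Notation oequiv := (outcome_rel weq).

Definition outcome_exp (o : outc) : exp :=
  match o with Acc => eone | Rej => ezero | Ret v => ERet v | Step p e => EAct p ;; e end.

Definition outcome_terms (L : seq (outc * S)) : seq (exp * S) :=
  [seq (outcome_exp x.1, x.2) | x <- L].

#[local] Instance outcome_exp_Proper : Proper (oequiv ==> weq) outcome_exp.
Proof. by case=> [||v|p e] [||v'|p' e'] //= => [-> | [-> ->]]. Qed.

Lemma wsum_gather (P : pred (outc * S)) o L :
    (forall x, P x -> oequiv x.1 o) ->
  wsum (outcome_terms L) ≡
  EWeight (\sum_(x <- L | P x) x.2) 1 (outcome_exp o)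
          (wsum (outcome_terms [seq x <- L | ~~ P x])).
Proof.
move=> Po; elim: L => [|x L IH] /=; first by rewrite big_nil weight_cons0.
rewrite big_cons IH; case: ifP => Px /=; last exact: weight_consC.
have -> : outcome_exp x.1 ≡ outcome_exp o by apply: outcome_exp_Proper; apply: Po.
exact: weight_consD.
Qed.

Lemma wsum_outcomes_equiv L1 L2 :
    (forall o, mass L1 (oequiv^~ o) = mass L2 (oequiv^~ o)) ->
  wsum (outcome_terms L1) ≡ wsum (outcome_terms L2).
Proof.
(* Gather on both sides the summands equivalent to the first outcome, then recurse. *)
have [n] := ubnP (size (L1 ++ L2)); elim: n L1 L2 => // n IH L1 L2 lt_n eqm.
case E: (L1 ++ L2) => [|x0 L0].
  by case: L1 L2 E {lt_n eqm} => [|? ?] [|? ?].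
pose P (x : outc * S) := `[< oequiv x.1 x0.1 >].
have Px0 : P x0 by apply/asboolP; reflexivity.
have gather L := @wsum_gather P x0.1 L (fun x => @asboolW _).
have massP L : \sum_(x <- L | P x) x.2 = mass L (oequiv^~ x0.1) by [].
rewrite (gather L1) (gather L2) !massP eqm; apply: EWeight_Proper => //; apply: IH.
  rewrite -filter_cat size_filter -ltnS (leq_trans _ lt_n) // -(count_predC P).
  by rewrite ltnS -{1}[count _ _]add0n ltn_add2r -has_count E /= Px0.
move=> o; rewrite !mass_filter; case: (pselect (oequiv o x0.1)) => [o_x0 | not_o_x0].
  rewrite !big_pred0 // => y; apply/negP => /andP [/asboolPn y_x0 /asboolP y_o];
  by apply: y_x0; transitivity o.
have drop L : \sum_(x <- L | ~~ P x && `[< oequiv x.1 o >]) x.2 = mass L (oequiv^~ o).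
  apply: eq_bigl => x; case: (asboolP (oequiv x.1 o)) => x_o; rewrite ?andbF // andbT.
  by apply/asboolPn => x_x0; apply: not_o_x0; transitivity x.1; first symmetry.
by rewrite !drop eqm.
Qed.

(** * Atoms and guarded sums *)

Lemma beval_atom_test (a b : atom T) : beval (atom_test a) b = (b == a).
Proof.
rewrite /atom_test; set l := enum T.
have -> : beval (foldr (fun t acc => BAnd (if a t then BVar t else BNot (BVar t)) acc) BOne l) b
          = all (fun t => b t == a t) l.
  by elim: l => //= t l ->; congr (_ && _); case: (a t) => /=; case: (b t).
apply/allP/eqP => [ba | -> //]; apply/ffunP => t; apply/eqP; exact/ba/mem_enum.
Qed.

Lemma atom_test_le (a : atom T) b : leA a b -> equivBA (BAnd b (atom_test a)) (atom_test a).
Proof.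
by move=> ab w /=; rewrite beval_atom_test; case: eqP => [->|]; rewrite ?andbT ?andbF.
Qed.

Lemma atom_test_nle (a : atom T) b : ~~ leA a b -> equivBA (BAnd b (atom_test a)) BZero.
Proof.
by move=> /negbTE ab w /=; rewrite beval_atom_test; case: eqP => [->|]; rewrite ?andbF ?andbT.
Qed.

Definition weq_at (a : atom T) (x y : exp) := test (atom_test a) ;; x ≡ test (atom_test a) ;; y.

#[local] Instance weq_at_Equivalence a : Equivalence (weq_at a).
Proof. by split=> [x|x y|x y z]; rewrite /weq_at => // ->. Qed.

#[local] Instance weq_weq_at a : subrelation weq (weq_at a).
Proof. by move=> x y xy; rewrite /weq_at xy. Qed.

#[local] Instance ESeq_weq_at a : Proper (weq_at a ==> weq ==> weq_at a) (@ESeq S T Act Out).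
Proof. by move=> x x' xx' f f' ->; rewrite /weq_at in xx' *; rewrite -!ax_S2 xx'. Qed.

#[local] Instance EWeight_weq_at a r s :
  Proper (weq_at a ==> weq_at a ==> weq_at a) (EWeight r s).
Proof.
by move=> x x' xx' y y' yy'; rewrite /weq_at in xx' yy' *; rewrite ax_D3 xx' yy' -ax_D3.
Qed.

Definition guarded_sum (l : seq (atom T)) (F : atom T -> exp) : exp :=
  foldr (fun a acc => F a +[atom_test a] acc) ezero l.

Definition atoms_test (l : seq (atom T)) : bexp T :=
  foldr (fun a acc => BOr (atom_test a) acc) BZero l.

Lemma guarded_sum_congr l F G :
  (forall a, weq_at a (F a) (G a)) -> guarded_sum l F ≡ guarded_sum l G.
Proof. by move=> FG; elim: l => //= a l ->; apply: guard_congr_test; apply: FG. Qed.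

Lemma guarded_sum_const l (e : exp) : guarded_sum l (fun=> e) ≡ e +[atoms_test l] ezero.
Proof.
elim: l => [|a l IH] /=; first by rewrite guard0.
rewrite IH (@guard_inner_equivBA _ _ (BOr (atom_test a) (atoms_test l))); last first.
  by move=> w /=; case: (beval (atom_test a) w); rewrite ?andbF.
rewrite (@guard_equivBA _ (BAnd (atom_test a) (BOr (atom_test a) (atoms_test l)))).
  by rewrite -ax_G4 ax_G1.
by move=> w /=; case: (beval (atom_test a) w).
Qed.

Lemma guarded_sum_enum (e : exp) F :
  (forall a, weq_at a e (F a)) -> e ≡ guarded_sum (enum (atom T)) F.
Proof.
move=> eF; rewrite -(guarded_sum_congr _ eF) guarded_sum_const guard1 // => w /=.
have : w \in enum (atom T) by rewrite mem_enum.
elim: (enum (atom T)) => //= a l IH; rewrite inE beval_atom_test.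
by case/orP => [->|/IH ->] //; rewrite orbT.
Qed.

(** * The fundamental theorem *)

Definition deriv_sum (e : exp) (a : atom T) : exp := wsum (outcome_terms (wderiv star e a)).

Definition deriv_expansion (e : exp) : exp := guarded_sum (enum (atom T)) (deriv_sum e).

Lemma outcome_terms_cat L1 L2 :
  outcome_terms (L1 ++ L2) = outcome_terms L1 ++ outcome_terms L2.
Proof. exact: map_cat. Qed.

Lemma outcome_terms_scale r L : outcome_terms (scale r L) = scale r (outcome_terms L).
Proof. by rewrite /outcome_terms /scale -!map_comp. Qed.

Definition is_acc (o : outc) : bool := if o is Acc then true else false.

Lemma wsum_acc_split L :
  wsum (outcome_terms L) ≡
  EWeight 1 (acc_weight L) (wsum (outcome_terms [seq x <- L | ~~ is_acc x.1])) eone.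
Proof.
rewrite (@wsum_gather (fun x => is_acc x.1) Acc); last by case=> -[].
rewrite ax_W2; have -> // : \sum_(x <- L | is_acc x.1) x.2 = acc_weight L.
by rewrite big_mkcond; apply: eq_bigr => -[[]].
Qed.

(* [wderiv star (e ;; f) a] and, when [leA a b], [wderiv star (ELoop b e) a] are
   convertible to [flatten] of these steps over [wderiv star e a], the latter with
   [c := star (acc_weight (wderiv star e a))]. *)
Definition deriv_seq_step (f : exp) (a : atom T) (x : outc * S) : seq (outc * S) :=
  match x.1 with
  | Acc => scale x.2 (wderiv star f a)
  | Rej => [:: (Rej, x.2)]
  | Ret v => [:: (Ret v, x.2)]
  | Step p e' => [:: (Step p (e' ;; f), x.2)]
  end.

Definition deriv_loop_step b (e : exp) c (x : outc * S) : seq (outc * S) :=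
  match x.1 with
  | Acc => [::]
  | Rej => [:: (Rej, c * x.2)]
  | Ret v => [:: (Ret v, c * x.2)]
  | Step p e' => [:: (Step p (e' ;; ELoop b e), c * x.2)]
  end.

Lemma wsum_seq_steps (f : exp) a L : weq_at a f (deriv_sum f a) ->
  weq_at a (wsum (outcome_terms L) ;; f)
           (wsum (outcome_terms (flatten [seq deriv_seq_step f a x | x <- L]))).
Proof.
move=> fa; elim: L => [|[o w] L IH] /=; first by rewrite ax_C2.
rewrite outcome_terms_cat wsum_cat ax_S4 IH weight_scale_l; apply: EWeight_weq_at => //.
rewrite /deriv_seq_step; case: o => [||v|p e'] /=;
  rewrite ?outcome_terms_scale ?wsum_scale ?weight_odot0.
- by rewrite ax_S1l !odot_seq; apply: EWeight_weq_at.
- by rewrite ax_S3.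
- by rewrite ax_S6.
- by rewrite ax_S2.
Qed.

Lemma wsum_loop_steps b (e : exp) c L :
  odot c ;; (wsum (outcome_terms [seq x <- L | ~~ is_acc x.1]) ;; ELoop b e) ≡
  wsum (outcome_terms (flatten [seq deriv_loop_step b e c x | x <- L])).
Proof.
rewrite wsum_seq -wsum_scale; elim: L => [|[o w] L IH] //=.
by case: o => [||v|p e'] //=; rewrite -IH ?ax_S3 ?ax_S6 ?ax_S2.
Qed.

Lemma weq_at_deriv_loop b (e : exp) a : weq_at a e (deriv_sum e a) ->
  weq_at a (ELoop b e) (deriv_sum (ELoop b e) a).
Proof.
rewrite /deriv_sum /=; case: ifP => [ab _ | /negbFE ab ea].
  by rewrite /weq_at ax_L1 (test_guardF _ _ (atom_test_nle ab)) /= weight_odot0 odot1_seq.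
set de := wderiv star e a.
have e_split :
    e ≡ EWeight 1 (acc_weight de) (wsum (outcome_terms [seq x <- de | ~~ is_acc x.1])) eone
          +[atom_test a] e.
  rewrite -{1}(ax_G1 star (atom_test a) e); apply: guard_congr_test.
  by apply: (transitivity ea); rewrite wsum_acc_split.
rewrite /weq_at (rule_L2 _ e_split) (test_guardT _ _ (atom_test_le ab)) mulr1.
by rewrite wsum_loop_steps.
Qed.

Lemma weq_at_deriv_sum (e : exp) a : weq_at a e (deriv_sum e a).
Proof.
elim: e a => [p|b|b e IHe f IHf|e IHe f IHf|b e IHe|v|r s e IHe f IHf] a.
- by rewrite /deriv_sum /= weight_odot0 odot1_seq -ax_S1r.
- rewrite /deriv_sum /=; case: ifP => ab /=; rewrite weight_odot0 odot1_seq /weq_at !ax_S7;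
    by apply: test_equivBA => w /=; rewrite beval_atom_test; case: eqP => [->|]; rewrite ?andbF.
- rewrite /deriv_sum /=; case: ifP => ab; rewrite /weq_at.
    by rewrite (test_guardT _ _ (atom_test_le ab)); apply: IHe.
  by rewrite (test_guardF _ _ (atom_test_nle (negbT ab))); apply: IHf.
- transitivity (deriv_sum e a ;; f); first by apply: ESeq_weq_at.
  exact: wsum_seq_steps.
- exact: weq_at_deriv_loop.
- by rewrite /deriv_sum /= weight_odot0 odot1_seq.
- transitivity (EWeight r s (deriv_sum e a) (deriv_sum f a)); first by apply: EWeight_weq_at.
  rewrite /deriv_sum /= outcome_terms_cat !outcome_terms_scale wsum_cat !wsum_scale.
  by rewrite weight_scale_r weight_scale_l.
Qed.

Theorem wequiv_deriv_expansion (e : exp) : e ≡ deriv_expansion e.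
Proof. exact/guarded_sum_enum/weq_at_deriv_sum. Qed.

Lemma wequiv_of_deriv_classes (e f : exp) :
    (forall a o, mass (wderiv star e a) (oequiv^~ o) = mass (wderiv star f a) (oequiv^~ o)) ->
  e ≡ f.
Proof.
move=> ef; rewrite (wequiv_deriv_expansion e) (wequiv_deriv_expansion f).
by apply: guarded_sum_congr => a; apply: weq_weq_at; apply: wsum_outcomes_equiv.
Qed.

(** * The system of an automaton *)

Lemma mass_wderiv_wsum L a A :
  mass (wderiv star (wsum L) a) A = \sum_(x <- L) x.2 * mass (wderiv star x.1 a) A.
Proof.
elim: L => [|x L IH] /=; last by rewrite mass_cat !mass_scale mul1r IH big_cons.
by rewrite big_nil /mass !big_cons big_nil /= !mul0r !add0r !if_same.
Qed.

Section System.
Variables (X : finType) (h : X -> exp).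

Definition subst_outcome (d : outcome Out Act X) : outc := omap (fun x' => eone ;; h x') d.

Lemma hsharp_GS l F : hsharp h (GS l F) = guarded_sum l (fun a => hsharp h (F a)).
Proof. by elim: l => //= a l ->. Qed.

Lemma hsharp_WS (I : Type) (idx : seq I) r F :
  hsharp h (WS idx r F) = wsum [seq (hsharp h (F d), r d) | d <- idx].
Proof. by elim: idx => //= d idx ->. Qed.

Lemma wderiv_guarded_sum l F a :
  a \in l -> wderiv star (guarded_sum l F) a = wderiv star (F a) a.
Proof.
elim: l => //= b l IH; rewrite inE /leA beval_atom_test.
by case: eqP => [->|_] // /IH.
Qed.

Lemma mass_wderiv_sys d a A :
  mass (wderiv star (hsharp h (sys S T d)) a) A = if `[< A (subst_outcome d) >] then 1 else 0.
Proof. by case: d => [||v|p x'] /=; rewrite mass1. Qed.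

Lemma sum_supp (nu : mw S (outcome Out Act X)) (F : outcome Out Act X -> S) :
  \sum_(d <- supp nu) ev nu d * F d = \sum_(x <- nu) x.2 * F x.1.
Proof.
have ev_sum d : ev nu d = \sum_(x <- nu | x.1 == d) x.2.
  by apply: eq_bigl => x; apply/asboolP/eqP.
transitivity (\sum_(d <- undup (map fst nu)) ev nu d * F d).
  rewrite big_filter big_mkcond; apply: eq_bigr => d _.
  by case: eqP => [->|]; rewrite ?mul0r.
under eq_bigr do rewrite ev_sum mulr_suml.
rewrite (exchange_big_dep xpredT) //=; apply: eq_big_seq => x x_nu.
under eq_bigl do rewrite eq_sym.
by rewrite -big_filter filter_pred1_uniq ?undup_uniq ?mem_undup ?map_f // big_seq1.
Qed.

Lemma mass_wderiv_tau beta x a A :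
  mass (wderiv star (hsharp h (tau beta x)) a) A =
  mass (beta x a) (fun d => A (subst_outcome d)).
Proof.
rewrite /tau hsharp_GS wderiv_guarded_sum ?mem_enum // hsharp_WS mass_wderiv_wsum big_map.
under eq_bigr do rewrite mass_wderiv_sys.
rewrite sum_supp /mass [RHS]big_mkcond; apply: eq_bigr => y _.
by case: ifP; rewrite ?mulr1 ?mulr0.
Qed.
End System.
End Equational.

(* [HSpos], [HSref], [HSconway] and [q_surj] are what makes [dbar] exist; here [q_hom]
   is assumed outright. *)
Theorem mainTheorem9
  (S : pzSemiRingType) (star : S -> S)
  (HSpos : positive_sr S) (HSref : refinement_sr S) (HSconway : conway_star star)
  (T : finType) (Act Out : eqType)
  (X : finType) (beta : wgkat_trans S T Act Out X)
  (Q : Type) (q : exp S T Act Out -> Q)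
  (q_surj : forall y : Q, exists e, q e = y)
  (q_ker : forall e f, q e = q f <-> wequiv star e f)
  (dbar : wgkat_trans S T Act Out Q)
  (q_hom : is_hom (@wderiv S star T Act Out) dbar q)
  (h : X -> exp S T Act Out) :
  is_solution star beta h <-> is_hom beta dbar (fun x => q (h x)).
Proof.
have q_dbar := (is_homP _ _ _).1 q_hom.
have q_rel o o' : outcome_rel (@wequiv S star T Act Out) o o' <-> omap q o = omap q o'.
  by apply: outcome_rel_kernel => e f; rewrite q_ker.
have q_classes e a o :
    mass (wderiv star e a) ((outcome_rel (@wequiv S star T Act Out))^~ o) =
    ev (dbar (q e) a) (omap q o).
  by rewrite q_dbar; apply: mass_ext => o'; apply: q_rel.
have q_subst d : omap q (subst_outcome h d) = omap (fun x => q (h x)) d.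
  by case: d => //= p x'; congr Step; apply/q_ker/ax_S1l.
rewrite is_homP; split=> [sol y a o | hom y].
  have -> : q (h y) = q (hsharp h (tau beta y)) by apply/q_ker/sol.
  by rewrite q_dbar mass_wderiv_tau; apply: mass_ext => d; rewrite q_subst.
apply: wequiv_of_deriv_classes => a o; rewrite q_classes hom mass_wderiv_tau.
by apply: mass_ext => d; rewrite q_rel q_subst.
Qed.
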